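(* Let $\alpha>0$ and let $f$ be an entire function with $f\in\bigcup_{p\ge 1}F^p_\alpha$. Then $$\lim_{p\to+\infty}\|f\|_{p,\alpha}=\|f\|_{\infty,\alpha}.$$
   Context: For $\alpha>0$ and $0<p<\infty$, $F^p_\alpha$ is the space of entire functions $f$ on $\mathbb{C}$ with $\|f\|_{p,\alpha}=\left[\frac{p\alpha}{2\pi}\int_{\mathbb{C}}|f(z)e^{-\alpha|z|^2/2}|^p\,dA(z)\right]^{1/p}<\infty$, where $dA$ is area measure. $F^\infty_\alpha$ is the space of entire $f$ with $\|f\|_{\infty,\alpha}=\operatorname{ess\,sup}_{z\in\mathbb{C}}|f(z)|e^{-\alpha|z|^2/2}<\infty$. *)

From HB Require Import structures.
From mathcomp Require Import all_boot all_order all_algebra.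
From mathcomp Require Import all_classical all_reals all_analysis.
From mathcomp Require Import complex ess_sup_inf.
Set Implicit Arguments. Unset Strict Implicit. Unset Printing Implicit Defensive.
Import Order.TTheory GRing.Theory Num.Theory ComplexField.
Import numFieldNormedType.Exports.
Local Open Scope classical_set_scope.
Local Open Scope ring_scope.

(* area measure on C, identified with R x R via (x, y) |-> x + i y *)
Definition area (R : realType) :=
  ((@lebesgue_measure R) \x (@lebesgue_measure R))%E.

Definition entire (R : realType) (f : R[i] -> R[i]) : Prop :=
  forall z : R[i], derivable (f : R[i]^o -> R[i]^o) z 1.

Definition fock_weighted (R : realType) (alpha : R) (f : R[i] -> R[i])
  (z : R * R) : R :=
  Normc.normc (f (Complex z.1 z.2)) * expR (- (alpha * (z.1 ^+ 2 + z.2 ^+ 2)) / 2).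

Definition fock_norm (R : realType) (p alpha : R) (f : R[i] -> R[i]) : \bar R :=
  (((p * alpha / (2 * pi))%:E *
     \int[@area R]_(z in setT) ((fock_weighted alpha f z) `^ p)%:E) `^ p^-1)%E.

Definition fock_norm_infty (R : realType) (alpha : R) (f : R[i] -> R[i]) : \bar R :=
  ess_sup (@area R) (fun z => (fock_weighted alpha f z)%:E).

(* If w >= 0 has a finite q-norm, its p-norms tend to its essential supremum S.
   For M < S the set {w > M} has positive measure m, so ||w||_p >= M (c_p m)^(1/p),
   which is >= M once c_p m >= 1.  For S < u < t, w^p <= u^(p-q) w^q almost
   everywhere, so ||w||_p^p <= c_p u^(p-q) ||w||_q^q, which is <= t^p once (t/u)^p
   outgrows the linear normalising factor c_p = p alpha / (2 pi).  For the Fock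
   norms w(z) = |f(z)| e^(-alpha |z|^2 / 2) is continuous, hence Borel, since f
   is entire. *)

From HB Require Import structures.
From mathcomp Require Import all_boot all_order all_algebra.
From mathcomp Require Import all_classical all_reals all_analysis.
From mathcomp Require Import complex ess_sup_inf measurable_realfun.
From mathcomp Require Import lra ring.
Set Implicit Arguments. Unset Strict Implicit. Unset Printing Implicit Defensive.
Import Order.TTheory GRing.Theory Num.Theory ComplexField.
Import numFieldNormedType.Exports.
Local Open Scope classical_set_scope.
Local Open Scope ring_scope.

Section powR_bounds.
Context {R : realType}.
Implicit Types (x u t p q C r : R).

Lemma powR_le_mul_powR x u q p : 0 <= x <= u -> 0 < q <= p ->
  x `^ p <= u `^ (p - q) * x `^ q.
Proof.
move=> /andP[x_ge0 x_le_u] /andP[q_gt0 q_le_p].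
have [->|x_neq0] := eqVneq x 0.
  by rewrite powR0 ?mulr_ge0 ?powR_ge0 // gt_eqF // (lt_le_trans q_gt0).
rewrite -{1}(subrK q p) (@powRD _ x) ?x_neq0 ?implybT //.
apply: ler_wpM2r; first exact: powR_ge0.
by rewrite ge0_ler_powR ?nnegrE ?subr_ge0 // (le_trans x_ge0).
Qed.

Lemma powRK t p : 0 <= t -> p != 0 -> (t `^ p) `^ p^-1 = t.
Proof. by move=> t_ge0 p_neq0; rewrite -powRrM mulfV // powRr1. Qed.

Lemma near_pinfty_mulr_le_powR C r : 1 < r -> \forall p \near +oo, C * p <= r `^ p.
Proof.
move=> r_gt1; have lnr_gt0 : 0 < ln r := ln_gt0 r_gt1.
near=> p.
have p_ge : 4 * C / ln r ^+ 2 <= p by near: p; apply: nbhs_pinfty_ge; rewrite num_real.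
have p_gt0 : 0 < p by near: p; apply: nbhs_pinfty_gt; rewrite num_real.
have y_ge0 : 0 <= p * ln r / 2 by rewrite divr_ge0 ?mulr_ge0 ?ltW.
have sq_le_exp : (p * ln r / 2) ^+ 2 <= r `^ p.
  rewrite /powR gt_eqF ?(lt_trans ltr01 r_gt1) // [in expR _](splitr (p * ln r)).
  rewrite expRD -expr2 ler_pXn2r ?nnegrE ?expR_ge0 //.
  by apply: le_trans (expR_ge1Dx _); rewrite lerDr.
apply: le_trans sq_le_exp.
move: p_ge; rewrite ler_pdivrMr ?exprn_gt0 // => p_ge; nra.
Unshelve. all: by end_near.
Qed.

End powR_bounds.

Section ereal_bounds.
Context {R : realType}.
Local Open Scope ereal_scope.
Implicit Types (x : \bar R) (t p : R).

Lemma poweRV_ge x t p : (0 < p)%R -> (0 <= t)%R -> (t `^ p)%:E <= x -> t%:E <= x `^ p^-1.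
Proof.
move=> p_gt0 t_ge0 tx; rewrite -(powRK t_ge0 (lt0r_neq0 p_gt0)) -poweR_EFin.
have t_p_ge0 : 0 <= (t `^ p)%:E by rewrite lee_fin powR_ge0.
apply: (gt0_ler_poweR _ _ _ tx); rewrite ?invr_ge0 ?ltW // in_itv /= leey andbT //.
exact: le_trans tx.
Qed.

Lemma poweRV_le x t p : (0 < p)%R -> (0 <= t)%R -> 0 <= x -> x <= (t `^ p)%:E -> x `^ p^-1 <= t%:E.
Proof.
move=> p_gt0 t_ge0 x_ge0 xt; rewrite -(powRK t_ge0 (lt0r_neq0 p_gt0)) -poweR_EFin.
apply: (gt0_ler_poweR _ _ _ xt); rewrite ?invr_ge0 ?ltW // in_itv /= leey andbT //.
by rewrite lee_fin powR_ge0.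
Qed.

Lemma cvge_near_bounds {T : Type} {F : set_system T} {FF : Filter F}
    (u : T -> \bar R) (l : \bar R) :
  (forall M : R, M%:E < l -> \forall y \near F, M%:E <= u y) ->
  (forall t : R, l < t%:E -> \forall y \near F, u y <= t%:E) ->
  u y @[y --> F] --> l.
Proof.
move=> lower upper; case: l lower upper => [r||] lower upper.
- have lower_r e : (0 < e)%R -> \forall y \near F, (r - e)%:E <= u y.
    by move=> e_gt0; apply: lower; rewrite lte_fin; lra.
  have upper_r e : (0 < e)%R -> \forall y \near F, u y <= (r + e)%:E.
    by move=> e_gt0; apply: upper; rewrite lte_fin; lra.
  apply/fine_cvgP; split.
    apply: filterS2 (lower_r _ ltr01) (upper_r _ ltr01) => y lo up.
    by rewrite fin_numElt (lt_le_trans (ltNyr _) lo) (le_lt_trans up (ltry _)).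
  apply/cvgrPdist_le => e e_gt0.
  apply: filterS2 (lower_r _ e_gt0) (upper_r _ e_gt0) => y /=.
  case: (u y) => [s||] //=; rewrite !lee_fin => lo up.
  by rewrite ler_distlC; apply/andP; split; lra.
- by apply/cvgeyPge => M; apply: lower; rewrite ltry.
- by apply/cvgeNyPle => M; apply: upper; rewrite ltNyr.
Qed.

End ereal_bounds.

Section scaled_Lnorm.
Context d (T : measurableType d) (R : realType) (mu : {measure set T -> \bar R}).
Variables (w : T -> R) (k : R).
Hypotheses (w_ge0 : forall x, 0 <= w x) (mw : measurable_fun setT w) (k_gt0 : 0 < k).
Local Open Scope ereal_scope.

(* [N p] is the p-norm of [w] with the normalising factor [p * k] in front of the
   integral; the Fock norms are the case [k = alpha / (2 * pi)]. *)
Local Notation I p := (\int[mu]_x (w x `^ p)%:E).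
Local Notation N p := (((p * k)%:E * I p) `^ p^-1).
Local Notation S := (ess_sup mu (fun x => (w x)%:E)).

Lemma measurable_EFin_powR p : measurable_fun setT (fun x => (w x `^ p)%:E).
Proof. by apply/measurable_EFinP; exact: measurableT_comp (measurable_powR p) mw. Qed.

Lemma integral_powR_ge0 p : 0 <= I p.
Proof. by apply: integral_ge0 => x _; rewrite lee_fin powR_ge0. Qed.

Lemma measurable_superlevel M : measurable [set x | (M < w x)%R].
Proof.
have := mw measurableT (measurable_itv `]M, +oo[); rewrite setTI.
by congr measurable; apply/seteqP; split => x /=; rewrite in_itv /= andbT.
Qed.

Lemma ess_sup_gt_measure_gt0 M : M%:E < S -> 0 < mu [set x | (M < w x)%R].
Proof.
move=> MS; rewrite lt0e measure_ge0 andbT; apply/negP => /eqP A0.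
move: MS; apply/negP; rewrite -leNgt; apply/ess_supP.
exists [set x | (M < w x)%R]; split => //; first exact: measurable_superlevel.
by move=> x /=; rewrite lee_fin => /negP; rewrite -ltNge.
Qed.

Lemma markov_powR M p : (0 <= M)%R -> (0 <= p)%R ->
  (M `^ p)%:E * mu [set x | (M < w x)%R] <= I p.
Proof.
move=> M_ge0 p_ge0; have mA := measurable_superlevel M.
have wp_ge0 x : 0 <= (w x `^ p)%:E by rewrite lee_fin powR_ge0.
apply: le_trans (ge0_subset_integral mu mA measurableT (measurable_EFin_powR p)
  (fun x _ => wp_ge0 x) (subsetT _)).
rewrite -integral_cst //; apply: ge0_le_integral => //.
- by move=> x _; rewrite lee_fin powR_ge0.
- exact: measurable_funS (measurable_EFin_powR p).
- by move=> x /= /ltW Mw; rewrite lee_fin; apply: ge0_ler_powR; rewrite ?nnegrE.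
Qed.

Lemma integral_powR_le_ae_bound u q p : (\forall x \ae mu, (w x <= u)%R) -> (0 < q <= p)%R ->
  I p <= (u `^ (p - q))%:E * I q.
Proof.
move=> w_le_u qp; rewrite -ge0_integralZl_EFin ?powR_ge0 //; first last.
- exact: measurable_EFin_powR.
- by move=> x _; rewrite lee_fin powR_ge0.
apply: ae_ge0_le_integral => //.
- by move=> x _; rewrite lee_fin powR_ge0.
- exact: measurable_EFin_powR.
- by move=> x _; rewrite -EFinM lee_fin mulr_ge0 ?powR_ge0.
- by apply: measurable_funeM; exact: measurable_EFin_powR.
apply: filterS w_le_u => x wu _; rewrite -EFinM lee_fin.
by apply: powR_le_mul_powR => //; rewrite w_ge0.
Qed.

Lemma scaled_Lnorm_lty_integral q : (0 < q)%R -> N q < +oo -> I q < +oo.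
Proof.
move=> q_gt0 Nq; rewrite ltNge leye_eq; apply/negP => /eqP Iq.
move: Nq; rewrite Iq gt0_muley ?lte_fin ?mulr_gt0 //.
by rewrite poweRyr ?ltxx // invr_neq0 // gt_eqF.
Qed.

Lemma scaled_Lnorm_ge_near M : M%:E < S -> \forall p \near +oo%R, M%:E <= N p.
Proof.
move=> MS; have [M_le0|M_gt0] := leP M 0%R.
  by apply: nearW => p; apply: le_trans (poweR_ge0 _ _); rewrite lee_fin.
have [m m_gt0 m_le] : exists2 m : R, (0 < m)%R & m%:E <= mu [set x | (M < w x)%R].
  move: (ess_sup_gt_measure_gt0 MS); case: (mu _) => [r||] // r_gt0.
    by exists r.
  by exists 1%R; rewrite ?leey.
near=> p.
have p_ge : ((k * m)^-1 <= p)%R by near: p; apply: nbhs_pinfty_ge; rewrite num_real.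
have km_gt0 : (0 < k * m)%R by rewrite mulr_gt0.
have p_gt0 : (0 < p)%R by apply: lt_le_trans p_ge; rewrite invr_gt0.
have pkm_ge1 : (1 <= p * k * m)%R.
  by rewrite -mulrA -(mulVf (lt0r_neq0 km_gt0)) ler_pM2r.
apply: poweRV_ge => //; first exact: ltW.
have I_ge : (M `^ p * m)%:E <= I p.
  apply: le_trans (markov_powR (ltW M_gt0) (ltW p_gt0)).
  by rewrite EFinM lee_wpmul2l // lee_fin powR_ge0.
apply: le_trans (lee_wpmul2l _ I_ge); last by rewrite lee_fin mulr_ge0 ?ltW.
rewrite -EFinM lee_fin; have := powR_ge0 M p; nra.
Unshelve. all: by end_near.
Qed.

Lemma scaled_Lnorm_le_near q t : 0 < mu setT -> (0 < q)%R -> N q < +oo -> S < t%:E ->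
  \forall p \near +oo%R, N p <= t%:E.
Proof.
move=> muT_gt0 q_gt0 Nq St.
have S_ge0 : 0 <= S by apply: ess_sup_gee => //; apply: nearW => x; rewrite lee_fin.
have S_fin : S \is a fin_num by rewrite ge0_fin_numE // (lt_trans St) ?ltry.
have [u u_gt0 [u_lt_t S_le_u]] : exists2 u : R, (0 < u)%R & (u < t)%R /\ S <= u%:E.
  have s_ge0 : (0 <= fine S)%R by rewrite fine_ge0.
  have s_lt_t : (fine S < t)%R by rewrite -lte_fin fineK.
  exists ((fine S + t) / 2)%R; first lra.
  by split; [lra|rewrite -(fineK S_fin) lee_fin; lra].
have w_le_u : \forall x \ae mu, (w x <= u)%R.
  apply: filterS (ess_sup_ge mu (fun x => (w x)%:E)) => x /= wS.
  by rewrite -lee_fin (le_trans wS S_le_u).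
have [K K_ge0 IK] : exists2 K : R, (0 <= K)%R & I q = K%:E.
  have Iq_fin : I q \is a fin_num.
    by rewrite ge0_fin_numE ?integral_powR_ge0 ?scaled_Lnorm_lty_integral.
  by exists (fine (I q)); rewrite ?fineK // fine_ge0 ?integral_powR_ge0.
near=> p.
have q_le_p : (q <= p)%R by near: p; apply: nbhs_pinfty_ge; rewrite num_real.
have growth : (k * K / u `^ q * p <= (t / u) `^ p)%R.
  by near: p; apply: near_pinfty_mulr_le_powR; rewrite ltr_pdivlMr // mul1r.
have p_gt0 : (0 < p)%R := lt_le_trans q_gt0 q_le_p.
apply: poweRV_le => //; first by rewrite ltW // (lt_trans u_gt0).
  by rewrite mule_ge0 ?integral_powR_ge0 // lee_fin mulr_ge0 ?ltW.
apply: le_trans (lee_wpmul2l _ (@integral_powR_le_ae_bound _ q p w_le_u _)) _.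
- by rewrite lee_fin mulr_ge0 ?ltW.
- by rewrite q_gt0.
rewrite IK -!EFinM lee_fin.
have -> : (t `^ p = (t / u) `^ p * u `^ p)%R.
  by rewrite -powRM ?divfK ?gt_eqF ?divr_ge0 ?ltW // (lt_trans u_gt0).
rewrite powRB ?(gt_eqF u_gt0) ?implybT //.
have -> : (p * k * (u `^ p / u `^ q * K) = k * K / u `^ q * p * u `^ p)%R by ring.
by rewrite ler_pM2r ?powR_gt0.
Unshelve. all: by end_near.
Qed.

Theorem cvg_scaled_Lnorm_ess_sup q : 0 < mu setT -> (0 < q)%R -> N q < +oo ->
  N p @[p --> +oo%R] --> S.
Proof.
move=> muT_gt0 q_gt0 Nq; apply: cvge_near_bounds.
- by move=> M; exact: scaled_Lnorm_ge_near.
- by move=> t; exact: (scaled_Lnorm_le_near muT_gt0 q_gt0 Nq).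
Qed.

End scaled_Lnorm.

Section complex_modulus.
Context {R : realType}.
Implicit Types (a b e : R) (z : R[i]).

Lemma normc_ge0 z : 0 <= Normc.normc z.
Proof. by case: z => a b; exact: sqrtr_ge0. Qed.

Lemma normc_Complex_le a b : Normc.normc (Complex a b) <= `|a| + `|b|.
Proof.
have -> : Complex a b = Complex a 0 + Complex 0 b by congr Complex; rewrite ?addr0 ?add0r.
apply: le_trans (le_normcD _ _) _.
by rewrite /= !expr0n /= addr0 add0r !sqrtr_sqr.
Qed.

Lemma ltc_normc z e : (`|z| < (e%:C)%C) = (Normc.normc z < e).
Proof. by rewrite normc_def ltcR; case: z. Qed.

Lemma continuous_normc : continuous (@Normc.normc R : R[i]^o -> R).
Proof.
move=> z; apply/(@cvgrPdist_lt _ R^o _ _ (@nbhs_filter R[i]^o z)) => e e_gt0.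
near=> y.
have : `|z - y| < (e%:C)%C.
  by near: y; apply: (@nbhsx_ballx _ R[i]^o); rewrite ltcR.
rewrite ltc_normc; apply: le_lt_trans.
exact: (@ler_dist_dist _ (Rcomplex R)).
Unshelve. all: by end_near.
Qed.

Lemma continuous_Complex : continuous (fun x : R * R => (Complex x.1 x.2 : R[i]^o)).
Proof.
move=> x; apply/cvgrPdist_lt => e e_gt0.
have e_real : e = ((complex.Re e)%:C)%C by rewrite RRe_real // gtr0_real.
have d_gt0 : 0 < complex.Re e / 2 by move: e_gt0; rewrite {1}e_real ltcR; lra.
apply: filterS (nbhsx_ballx x _ d_gt0) => y [y1 y2].
rewrite e_real ltc_normc; apply: le_lt_trans (normc_Complex_le _ _) _.
by move: y1 y2; rewrite /ball /=; lra.
Qed.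

End complex_modulus.

Lemma entire_continuous {R : realType} {f : R[i] -> R[i]} :
  entire f -> continuous (f : R[i]^o -> R[i]^o).
Proof. by move=> ef z; apply: differentiable_continuous; apply/derivable1_diffP. Qed.

Lemma fock_weighted_ge0 {R : realType} (alpha : R) f z : 0 <= fock_weighted alpha f z.
Proof. by rewrite mulr_ge0 ?normc_ge0 ?expR_ge0. Qed.

Lemma continuous_fock_weighted {R : realType} (alpha : R) f :
  entire f -> continuous (fock_weighted alpha f).
Proof.
move=> ef z.
have normf : continuous (fun x : R * R => Normc.normc (f (Complex x.1 x.2))).
  move=> x; exact: (continuous_comp (@continuous_Complex _ x)
                     (continuous_comp (@entire_continuous _ _ ef _) (@continuous_normc _ _))).
apply: cvgM; first exact: normf.
apply: continuous_comp; last exact: continuous_expR.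
apply: cvgM; last exact: cvg_cst.
apply: cvgN; apply: cvgM; first exact: cvg_cst.
by apply: cvgD; apply: cvgM; [exact: cvg_fst|exact: cvg_fst|exact: cvg_snd|exact: cvg_snd].
Qed.

Section measurable_plane.
Context {R : realType}.

Lemma open_prod_measurable (U : set (R * R)) : open U -> measurable U.
Proof.
move=> oU.
pose box (q : rat * rat * rat) : set (R * R) := ball ((ratr q.1.1, ratr q.1.2) : R * R) (ratr q.2).
have mbox q : measurable (box q).
  by apply: measurableX; rewrite ball_itv; exact: measurable_itv.
have -> : U = \bigcup_(q in [set q | box q `<=` U]) box q.
  apply/seteqP; split => [x Ux|x [q qU /qU] //].
  have /nbhs_ballP[e /= e_gt0 xeU] := open_nbhs_nbhs (conj oU Ux).
  have [r] : exists r : rat, ratr r \in `]0, e / 2[ by apply: rat_in_itvoo; lra.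
  rewrite in_itv /= => /andP[r_gt0 r_lt].
  have [q1] := @rat_in_itvoo R (x.1 - ratr r) (x.1 + ratr r) ltac:(lra).
  have [q2] := @rat_in_itvoo R (x.2 - ratr r) (x.2 + ratr r) ltac:(lra).
  rewrite !in_itv /= => /andP[h1 h2] /andP[h3 h4].
  exists (q1, q2, r); last by split; rewrite /ball /= ltr_distlC; apply/andP; split; lra.
  move=> y [] /=; rewrite /ball /= !ltr_distlC => /andP[y1 y2] /andP[y3 y4].
  by apply: xeU; split; rewrite /ball /= ltr_distlC; apply/andP; split; lra.
rewrite bigcup_mkcond; apply: countable_bigcupT_measurable; first exact: countableP.
by move=> q; case: ifP.
Qed.

Lemma continuous_prod_measurable_fun (g : R * R -> R) : continuous g -> measurable_fun setT g.
Proof.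
move=> /continuousP cg; apply: (measurability _ (RGenOpens.measurableE R)).
move=> _ [_ [a [b ->]] <-]; apply: measurableI => //.
by apply: open_prod_measurable; apply: cg; exact: interval_open.
Qed.

Lemma area_setT_gt0 : (0 < @area R setT)%E.
Proof.
apply: (@lt_le_trans _ _ (@area R (`[0%R, 1%R] `*` `[0%R, 1%R]))).
  rewrite /area product_measure1E //= lebesgue_measure_itv /=.
  by rewrite lte_fin ltr01 oppr0 adde0 mule1 lte01.
by apply: le_measure; rewrite ?inE //; apply: measurableX.
Qed.

End measurable_plane.

Unset Implicit Arguments.

Theorem lemma2p4 (R : realType) (alpha : R) (f : R[i] -> R[i]) :
  0 < alpha -> entire f ->
  (exists p : R, 1 <= p /\ (fock_norm p alpha f < +oo)%E) ->
  fock_norm p alpha f @[p --> +oo] --> fock_norm_infty alpha f.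
Proof.
move=> alpha_gt0 ef [q [q_ge1 Nq]].
have k_gt0 : 0 < alpha / (2 * pi) by rewrite divr_gt0 // mulr_gt0 // pi_gt0.
have mw := continuous_prod_measurable_fun (continuous_fock_weighted (alpha := alpha) ef).
rewrite /fock_norm in Nq *; rewrite -mulrA in Nq.
under eq_fun do rewrite -mulrA.
(* [mu] is given explicitly: [area] and [mw] use convertible but syntactically
   different measurable structures on [R * R], which unification does not match. *)
apply: (@cvg_scaled_Lnorm_ess_sup _ _ _ (@area R) _ _ (fock_weighted_ge0 alpha f) mw k_gt0 _
  area_setT_gt0 _ Nq).
exact: lt_le_trans ltr01 q_ge1.
Qed.
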